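(* For a two-player stage game $G$, we have $G\notin\mathcal{G}_{LS}^{p,p}$ and $G\in\mathcal{G}_{LS}^{m,p}$ if and only if one of the following holds: (1) $|V_1^{p,p}|=0$, $|V_2^{p,p}|=0$, and condition $\mathcal{C}^{m,p}(G)$ holds; (2) $|V_1^{p,p}|=1$, $|V_2^{p,p}|=1$, and $\mathcal{C}^{m,p}(G)$ holds; (3) $|V_1^{p,p}|>1$, $|V_2^{p,p}|=1$, there do not exist $\hat a_1,a_1'\in A_1$, $\hat a_2\in A_2$ with $u_1(\hat a_1,\hat a_2)<u_1(a_1',\hat a_2)$ and $\hat a_2$ a best response to $\hat a_1$, and $\mathcal{C}^{m,p}(G)$ holds.
   Context: A two-player stage game $G$ has finite nonempty action sets $A_1,A_2$ and payoffs $u_1,u_2:A_1\times A_2\to\mathbb{R}$, extended to mixed strategies by expectation; $S_{\sigma_1}$ is the support of $\sigma_1$; best response means maximizing expected payoff against the opponent's strategy. $G(T)$ is the $T$-round repetition with realized actions observed each round and payoffs the expected sum of stage payoffs; an SPE of $G(T)$ is a strategy profile whose continuation after every history of length $k<T$ is a Nash equilibrium of $G(T-k)$. Regimes: pure-pure ($p,p$): both players restricted to actions (in the stage game and in every round, including deviations); mixed-pure ($m,p$): player 1 may mix, player 2 uses only actions; mixed-mixed ($m,m$): both may mix. For regime $r$, $\mathrm{Nash}^r(G)$ is the set of stage-game profiles available in $r$ from which no player can profitably deviate unilaterally to a strategy available in $r$, and $V_i^r=\{u_i(\sigma):\sigma\in\mathrm{Nash}^r(G)\}$. Locally suboptimal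 behavior occurs in an SPE $\mu$ of $G(T)$ (regime $r$) if for some history $h$ of length $k<T$, $(\mu_1(h),\mu_2(h))\notin\mathrm{Nash}^r(G)$. $\mathcal{G}_{LS}^r$ is the set of stage games $G$ for which there exist $T\ge1$ and an SPE of $G(T)$ in regime $r$ in which locally suboptimal behavior occurs. Condition $\mathcal{C}^{m,p}(G)$ holds iff one of: (i) $|V_1^{m,p}|>1$, $|V_2^{m,p}|>1$, and some $(\hat\sigma_1,\hat a_2)\in\Delta A_1\times A_2$ is not in $\mathrm{Nash}^{m,p}(G)$; (ii) $|V_1^{m,p}|>1$, $|V_2^{m,p}|=1$, and there exist $\hat\sigma_1\in\Delta A_1$, $a_1'\in A_1$, $\hat a_2\in A_2$ with $u_1(\hat\sigma_1,\hat a_2)<u_1(a_1',\hat a_2)$, $\hat a_2$ a best response to $\hat\sigma_1$, and, if $|S_{\hat\sigma_1}|>1$, with $D=\{u_1(\sigma)-u_1(\sigma'):\sigma,\sigma'\in\mathrm{Nash}^{m,p}(G)\}$, some $a\in S_{\hat\sigma_1}$ such that for every $a'\in S_{\hat\sigma_1}\setminus\{a\}$ there are an integer $n\ge0$ and $d_1,\dots,d_n\in D$ with $u_1(a,\hat a_2)-u_1(a',\hat a_2)=\sum_{k=1}^n d_k$; (iii) $|V_1^{m,p}|=1$, $|V_2^{m,p}|>1$, and there exist $\hat\sigma_1\in\Delta A_1$, $\hat a_2,a_2'\in A_2$ with $u_2(\hat\sigma_1,\hat a_2)<u_2(\hat\sigma_1,a_2')$ and $\hat\sigma_1$ a best response to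 $\hat a_2$. *)

From HB Require Import structures.
From mathcomp Require Import all_boot all_order all_algebra.
From mathcomp Require Import reals.
Set Implicit Arguments. Unset Strict Implicit. Unset Printing Implicit Defensive.
Import Order.TTheory GRing.Theory Num.Theory.
Local Open Scope ring_scope.

Inductive regime := PP | MP | MM.

Section Games.
Context {R : realType} {A1 A2 : finType}.

Definition mixed {A : finType} (s : {ffun A -> R}) : Prop :=
  (forall a, 0 <= s a) /\ \sum_a s a = 1.

Definition pure_mixed {A : finType} (a : A) : {ffun A -> R} :=
  [ffun b => (b == a)%:R].

Definition is_pure {A : finType} (s : {ffun A -> R}) : Prop :=
  exists a, s = pure_mixed a.

Definition avail1 (r : regime) (s : {ffun A1 -> R}) : Prop :=
  mixed s /\ (r = PP -> is_pure s).
Definition avail2 (r : regime) (s : {ffun A2 -> R}) : Prop :=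
  mixed s /\ (r <> MM -> is_pure s).

Definition EU (u : A1 -> A2 -> R) (s1 : {ffun A1 -> R}) (s2 : {ffun A2 -> R}) : R :=
  \sum_a1 \sum_a2 s1 a1 * s2 a2 * u a1 a2.

Definition stageNash (u1 u2 : A1 -> A2 -> R) (r : regime)
    (s1 : {ffun A1 -> R}) (s2 : {ffun A2 -> R}) : Prop :=
  [/\ avail1 r s1, avail2 r s2,
      (forall t1, avail1 r t1 -> EU u1 t1 s2 <= EU u1 s1 s2) &
      (forall t2, avail2 r t2 -> EU u2 s1 t2 <= EU u2 s1 s2)].

Definition Vpay1 (u1 u2 : A1 -> A2 -> R) (r : regime) (v : R) : Prop :=
  exists s1 s2, stageNash u1 u2 r s1 s2 /\ v = EU u1 s1 s2.
Definition Vpay2 (u1 u2 : A1 -> A2 -> R) (r : regime) (v : R) : Prop :=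
  exists s1 s2, stageNash u1 u2 r s1 s2 /\ v = EU u2 s1 s2.

Definition noVal (V : R -> Prop) : Prop := forall v, ~ V v.
Definition oneVal (V : R -> Prop) : Prop := exists v, V v /\ forall w, V w -> w = v.
Definition manyVals (V : R -> Prop) : Prop := exists v w, [/\ V v, V w & v <> w].

(* Repeated game G(T): histories are sequences of realized action profiles;
   (behavioral) strategies map histories to stage strategies. *)
Definition history := seq (A1 * A2).
Definition strat1 := history -> {ffun A1 -> R}.
Definition strat2 := history -> {ffun A2 -> R}.

Definition avail_strat1 (r : regime) (m : strat1) : Prop := forall h, avail1 r (m h).
Definition avail_strat2 (r : regime) (m : strat2) : Prop := forall h, avail2 r (m h).

Fixpoint value (u : A1 -> A2 -> R) (n : nat) (m1 : strat1) (m2 : strat2)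
    (h : history) : R :=
  match n with
  | 0 => 0
  | n'.+1 => \sum_a1 \sum_a2
      m1 h a1 * m2 h a2 * (u a1 a2 + value u n' m1 m2 (rcons h (a1, a2)))
  end.

Definition payoff (u : A1 -> A2 -> R) (n : nat) (m1 : strat1) (m2 : strat2) : R :=
  value u n m1 m2 [::].

Definition repNash (u1 u2 : A1 -> A2 -> R) (r : regime) (n : nat)
    (m1 : strat1) (m2 : strat2) : Prop :=
  [/\ avail_strat1 r m1, avail_strat2 r m2,
      (forall t1, avail_strat1 r t1 -> payoff u1 n t1 m2 <= payoff u1 n m1 m2) &
      (forall t2, avail_strat2 r t2 -> payoff u2 n m1 t2 <= payoff u2 n m1 m2)].

Definition cont1 (m : strat1) (h : history) : strat1 := fun h' => m (h ++ h').
Definition cont2 (m : strat2) (h : history) : strat2 := fun h' => m (h ++ h').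

Definition SPE (u1 u2 : A1 -> A2 -> R) (r : regime) (T : nat)
    (m1 : strat1) (m2 : strat2) : Prop :=
  avail_strat1 r m1 /\ avail_strat2 r m2 /\
  forall h : history, (size h < T)%N ->
    repNash u1 u2 r (T - size h) (cont1 m1 h) (cont2 m2 h).

Definition LS (u1 u2 : A1 -> A2 -> R) (r : regime) : Prop :=
  exists T : nat, (1 <= T)%N /\
  exists (m1 : strat1) (m2 : strat2), SPE u1 u2 r T m1 m2 /\
  exists h : history, (size h < T)%N /\ ~ stageNash u1 u2 r (m1 h) (m2 h).

Definition supp {A : finType} (s : {ffun A -> R}) : {set A} := [set a | s a != 0].

Definition Dset (u1 u2 : A1 -> A2 -> R) (d : R) : Prop :=
  exists s1 s2 t1 t2, [/\ stageNash u1 u2 MP s1 s2, stageNash u1 u2 MP t1 t2 &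
                         d = EU u1 s1 s2 - EU u1 t1 t2].

Definition Cmp (u1 u2 : A1 -> A2 -> R) : Prop :=
  [/\ manyVals (Vpay1 u1 u2 MP), manyVals (Vpay2 u1 u2 MP) &
      exists (s1 : {ffun A1 -> R}) (a2 : A2),
        mixed s1 /\ ~ stageNash u1 u2 MP s1 (pure_mixed a2)]
  \/
  [/\ manyVals (Vpay1 u1 u2 MP), oneVal (Vpay2 u1 u2 MP) &
      exists (s1 : {ffun A1 -> R}) (a1' : A1) (a2 : A2),
        [/\ mixed s1,
            EU u1 s1 (pure_mixed a2) < u1 a1' a2,
            (forall b2 : A2, EU u2 s1 (pure_mixed b2) <= EU u2 s1 (pure_mixed a2)) &
            ((1 < #|supp s1|)%N ->
              exists2 a, a \in supp s1 &
                forall a', a' \in supp s1 -> a' != a ->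
                  exists ds : seq R, (forall d, d \in ds -> Dset u1 u2 d) /\
                    u1 a a2 - u1 a' a2 = \sum_(d <- ds) d)]]
  \/
  [/\ oneVal (Vpay1 u1 u2 MP), manyVals (Vpay2 u1 u2 MP) &
      exists (s1 : {ffun A1 -> R}) (a2 a2' : A2),
        [/\ mixed s1,
            EU u2 s1 (pure_mixed a2) < EU u2 s1 (pure_mixed a2') &
            (forall t1, mixed t1 -> EU u1 t1 (pure_mixed a2) <= EU u1 s1 (pure_mixed a2))]].

End Games.

From HB Require Import structures.
From mathcomp Require Import all_boot all_order all_algebra.
From mathcomp Require Import reals.
From mathcomp Require Import ring lra zify.
From Stdlib Require Import Classical.
Import Order.TTheory GRing.Theory Num.Theory.
Local Open Scope ring_scope.
Set Implicit Arguments. Unset Strict Implicit. Unset Printing Implicit Defensive.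

(* The proof rests on two general facts about an arbitrary regime r.
   - Sufficiency (via the one-shot deviation principle): a first-round profile
     followed by stage Nash equilibria chosen as a function of the first-round outcome
     is an SPE as soon as the first round is incentive compatible given these
     continuations (plan_LS).  Rewards and punishments come from stage Nash equilibria
     with different payoffs, repeated often enough (pure_LS); in the mixed-pure regime
     player 1's indifference on his support is restored by schedules of differences of
     Nash payoffs (mixed_LS).
   - Necessity (for r <> (m,m), where player 2 plays actions): at a locally suboptimal
     history of maximal length all later play is stage Nash, so a player with a single
     stage Nash payoff best-responds there, and player 1's support actions differ in
     payoff by sums of differences of stage Nash payoffs (LS_witness).
   These give G_LS^{m,p} = C^{m,p} (Cmp_LS, LS_Cmp) and the needed facts about
   G_LS^{p,p}; the theorem follows by a case analysis on |V_1^{p,p}| and |V_2^{p,p}|. *)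

Section StagePayoffs.
Variables (R : realType) (A1 A2 : finType).

Lemma pure_mixedE {A : finType} (a b : A) :
  (pure_mixed a : {ffun A -> R}) b = (b == a)%:R.
Proof. by rewrite ffunE. Qed.

Lemma sum_pure {A : finType} (a : A) (F : A -> R) :
  \sum_b (pure_mixed a : {ffun A -> R}) b * F b = F a.
Proof.
rewrite (bigD1 a) //= big1 ?addr0; first by rewrite pure_mixedE eqxx mul1r.
by move=> b /negbTE nb; rewrite pure_mixedE nb mul0r.
Qed.

Lemma mixed_pure {A : finType} (a : A) : mixed (pure_mixed a : {ffun A -> R}).
Proof.
split=> [b|]; first by rewrite pure_mixedE ler0n.
by rewrite -(sum_pure a (fun _ => 1)); apply: eq_bigr => b _; rewrite mulr1.
Qed.

Lemma avail1_pure r (a : A1) : avail1 r (pure_mixed a : {ffun A1 -> R}).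
Proof. by split; [apply: mixed_pure | exists a]. Qed.

Lemma avail2_pure r (a : A2) : avail2 r (pure_mixed a : {ffun A2 -> R}).
Proof. by split; [apply: mixed_pure | exists a]. Qed.

Lemma pure_of_avail1 (s : {ffun A1 -> R}) : avail1 PP s -> exists a, s = pure_mixed a.
Proof. by case=> _ /(_ erefl). Qed.

Lemma pure_of_avail2 r (s : {ffun A2 -> R}) :
  r <> MM -> avail2 r s -> exists a, s = pure_mixed a.
Proof. by move=> hr [_ /(_ hr)]. Qed.

Lemma sum_pure_l a1 (t : {ffun A2 -> R}) (F : A1 -> A2 -> R) :
  \sum_b1 \sum_b2 (pure_mixed a1 : {ffun A1 -> R}) b1 * t b2 * F b1 b2 =
  \sum_b2 t b2 * F a1 b2.
Proof.
rewrite -(sum_pure a1 (fun b1 => \sum_b2 t b2 * F b1 b2)).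
by apply: eq_bigr => b1 _; rewrite mulr_sumr; apply: eq_bigr => b2 _; rewrite mulrA.
Qed.

Lemma sum_pure_r a2 (t : {ffun A1 -> R}) (F : A1 -> A2 -> R) :
  \sum_b1 \sum_b2 t b1 * (pure_mixed a2 : {ffun A2 -> R}) b2 * F b1 b2 =
  \sum_b1 t b1 * F b1 a2.
Proof.
apply: eq_bigr => b1 _; rewrite -(sum_pure a2 (fun b2 => t b1 * F b1 b2)).
by apply: eq_bigr => b2 _; rewrite mulrCA mulrA.
Qed.

Lemma EU_pure1 (u : A1 -> A2 -> R) a1 s2 :
  EU u (pure_mixed a1) s2 = \sum_a2 s2 a2 * u a1 a2.
Proof. exact: sum_pure_l. Qed.

Lemma EU_pure2 (u : A1 -> A2 -> R) s1 a2 :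
  EU u s1 (pure_mixed a2) = \sum_a1 s1 a1 * u a1 a2.
Proof. exact: sum_pure_r. Qed.

Lemma EU_pp (u : A1 -> A2 -> R) a1 a2 :
  EU u (pure_mixed a1) (pure_mixed a2) = u a1 a2.
Proof. by rewrite EU_pure1 sum_pure. Qed.

Lemma EU_mix1 (u : A1 -> A2 -> R) t s2 :
  EU u t s2 = \sum_b t b * EU u (pure_mixed b) s2.
Proof.
apply: eq_bigr => b _; rewrite EU_pure1 mulr_sumr.
by apply: eq_bigr => a2 _; rewrite mulrA.
Qed.

Lemma EU_mix2 (u : A1 -> A2 -> R) s1 t :
  EU u s1 t = \sum_b t b * EU u s1 (pure_mixed b).
Proof.
rewrite /EU exchange_big; apply: eq_bigr => b _.
rewrite -/(EU _ _ _) EU_pure2 mulr_sumr.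
by apply: eq_bigr => a1 _; rewrite mulrA [t b * _]mulrC.
Qed.

Lemma mix_le {A : finType} (s : {ffun A -> R}) (f : A -> R) M :
  mixed s -> (forall b, f b <= M) -> \sum_b s b * f b <= M.
Proof.
case=> s0 s1 fM; apply: le_trans (_ : \sum_b s b * M <= M).
  by apply: ler_sum => b _; apply: ler_wpM2l.
by rewrite -mulr_suml s1 mul1r.
Qed.

Lemma mix_ge {A : finType} (s : {ffun A -> R}) (f : A -> R) M :
  mixed s -> (forall b, M <= f b) -> M <= \sum_b s b * f b.
Proof.
case=> s0 s1 fM; apply: (@le_trans _ _ (\sum_b s b * M)).
  by rewrite -mulr_suml s1 mul1r.
by apply: ler_sum => b _; apply: ler_wpM2l.
Qed.

Lemma mix_supp_eq {A : finType} (s : {ffun A -> R}) (f : A -> R) M :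
  mixed s -> (forall b, s b != 0 -> f b = M) -> \sum_b s b * f b = M.
Proof.
case=> s0 s1 fM; rewrite -[RHS]mul1r -s1 mulr_suml; apply: eq_bigr => b _.
by have [->|/fM ->] := eqVneq (s b) 0; rewrite ?mul0r.
Qed.

Lemma mix_eq_supp {A : finType} (s : {ffun A -> R}) (f : A -> R) M :
  mixed s -> (forall b, f b <= M) -> \sum_b s b * f b = M ->
  forall b, s b != 0 -> f b = M.
Proof.
case=> s0 s1 fM hs b sb.
have gap0 : \sum_b s b * (M - f b) = 0.
  under eq_bigr do rewrite mulrBr.
  by rewrite sumrB -mulr_suml s1 mul1r hs subrr.
have gap_ge0 c : predT c -> 0 <= s c * (M - f c).
  by move=> _; apply: mulr_ge0 => //; rewrite subr_ge0.
move/eqP: (psumr_eq0P gap_ge0 gap0 (i := b) isT).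
by rewrite mulf_eq0 (negbTE sb) /= subr_eq0 => /eqP ->.
Qed.

Lemma mix_exists {A : finType} (s : {ffun A -> R}) : mixed s -> exists b, s b != 0.
Proof.
case=> _ s1; apply: NNPP => none.
move: s1; rewrite big1 => [/eqP|b _]; first by rewrite eq_sym oner_eq0.
by apply/eqP; apply/negPn/negP => nb; apply: none; exists b.
Qed.

Lemma EU_shift (u : A1 -> A2 -> R) t s c :
  mixed t -> mixed s ->
  \sum_b1 \sum_b2 t b1 * s b2 * (u b1 b2 + c) = EU u t s + c.
Proof.
move=> [_ t1] [_ s1].
have -> : \sum_b1 \sum_b2 t b1 * s b2 * (u b1 b2 + c) =
          \sum_b1 (\sum_b2 t b1 * s b2 * u b1 b2 + t b1 * c).
  apply: eq_bigr => b1 _; under eq_bigr do rewrite mulrDr.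
  by rewrite big_split /= -mulr_suml -mulr_sumr s1 mulr1.
by rewrite big_split /= -mulr_suml t1 mul1r.
Qed.

Lemma EU2_gap_supp (u : A1 -> A2 -> R) (s1 : {ffun A1 -> R}) x y :
  mixed s1 -> EU u s1 (pure_mixed y) < EU u s1 (pure_mixed x) ->
  exists b, s1 b != 0 /\ u b y < u b x.
Proof.
move=> [s0 _] lt; apply: NNPP => none; move: lt; apply/negP; rewrite -leNgt !EU_pure2.
apply: ler_sum => b _; have [->|sb] := eqVneq (s1 b) 0; first by rewrite !mul0r.
apply: ler_wpM2l => //; rewrite leNgt; apply/negP => l; apply: none; by exists b.
Qed.

End StagePayoffs.

Section Repeated.
Variables (R : realType) (A1 A2 : finType) (u1 u2 : A1 -> A2 -> R).

Lemma stageNashP r s1 s2 :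
  stageNash u1 u2 r s1 s2 <->
  [/\ avail1 r s1, avail2 r s2,
      (forall b1, EU u1 (pure_mixed b1) s2 <= EU u1 s1 s2) &
      (forall b2, EU u2 s1 (pure_mixed b2) <= EU u2 s1 s2)].
Proof.
split=> [[av1 av2 B1 B2]|[av1 av2 B1 B2]].
  by split=> // [b1|b2]; [apply: B1; apply: avail1_pure | apply: B2; apply: avail2_pure].
split=> // [t1 [mt1 _]|t2 [mt2 _]].
  by rewrite EU_mix1; apply: mix_le.
by rewrite EU_mix2; apply: mix_le.
Qed.

Lemma stageNash_mixed r s1 s2 : stageNash u1 u2 r s1 s2 -> mixed s1 /\ mixed s2.
Proof. by case=> [[m1 _] [m2 _] _ _]. Qed.

Lemma value_cat (u : A1 -> A2 -> R) n (m1 : strat1) (m2 : strat2) g h :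
  value u n (cont1 m1 g) (cont2 m2 g) h = value u n m1 m2 (g ++ h).
Proof.
elim: n h => [|n IH] h //=.
by apply: eq_bigr => b1 _; apply: eq_bigr => b2 _; rewrite IH rcons_cat.
Qed.

Lemma value_ext (u : A1 -> A2 -> R) n (m1 m1' : strat1) (m2 m2' : strat2) h :
  (forall h', (size h <= size h')%N -> m1 h' = m1' h' /\ m2 h' = m2' h') ->
  value u n m1 m2 h = value u n m1' m2' h.
Proof.
elim: n h => [|n IH] h E //=.
have [-> ->] := E h (leqnn _).
apply: eq_bigr => b1 _; apply: eq_bigr => b2 _; rewrite IH // => h' hh.
by apply: E; apply: leq_trans hh; rewrite size_rcons.
Qed.

Definition no_oneshot1 r (m1 : strat1) (m2 : strat2) g k :=
  forall t, avail1 r t ->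
  \sum_b1 \sum_b2 t b1 * m2 g b2 * (u1 b1 b2 + value u1 k m1 m2 (rcons g (b1, b2)))
  <= \sum_b1 \sum_b2 m1 g b1 * m2 g b2 * (u1 b1 b2 + value u1 k m1 m2 (rcons g (b1, b2))).

Definition no_oneshot2 r (m1 : strat1) (m2 : strat2) g k :=
  forall t, avail2 r t ->
  \sum_b1 \sum_b2 m1 g b1 * t b2 * (u2 b1 b2 + value u2 k m1 m2 (rcons g (b1, b2)))
  <= \sum_b1 \sum_b2 m1 g b1 * m2 g b2 * (u2 b1 b2 + value u2 k m1 m2 (rcons g (b1, b2))).

Lemma SPE_no_oneshot r T m1 m2 g :
  SPE u1 u2 r T m1 m2 -> (size g < T)%N ->
  no_oneshot1 r m1 m2 g (T - size g).-1 /\ no_oneshot2 r m1 m2 g (T - size g).-1.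
Proof.
case=> av1 [av2 H] hg; have := H g hg.
have -> : (T - size g = (T - size g).-1.+1)%N by rewrite prednK // subn_gt0.
set k := (T - size g).-1; case=> _ _ N1 N2.
(* A deviation confined to history g leaves the play after g unchanged. *)
have tail_eq (u : A1 -> A2 -> R) (t1 : strat1) (t2 : strat2) x :
    (forall y h', t1 (y :: h') = m1 (g ++ y :: h') /\ t2 (y :: h') = m2 (g ++ y :: h')) ->
    value u k t1 t2 [:: x] = value u k m1 m2 (rcons g x).
  move=> E; rewrite -cats1 -value_cat; apply: value_ext => -[|y h'] // _; exact: E.
split=> t avt.
- pose t1 : @strat1 R A1 A2 := fun h' => if h' is [::] then t else m1 (g ++ h').
  have := N1 t1 (ltac:(by case=> [|x h'] //=; apply: av1) : avail_strat1 r t1).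
  rewrite /payoff /= /cont2 /cont1 !cats0; congr (_ <= _);
    by apply: eq_bigr => b1 _; apply: eq_bigr => b2 _; rewrite tail_eq.
- pose t2 : @strat2 R A1 A2 := fun h' => if h' is [::] then t else m2 (g ++ h').
  have := N2 t2 (ltac:(by case=> [|x h'] //=; apply: av2) : avail_strat2 r t2).
  rewrite /payoff /= /cont2 /cont1 !cats0; congr (_ <= _);
    by apply: eq_bigr => b1 _; apply: eq_bigr => b2 _; rewrite tail_eq.
Qed.

End Repeated.

Section OneShot.
Variables (R : realType) (A1 A2 : finType) (u1 u2 : A1 -> A2 -> R).
Variables (r : regime) (T : nat) (m1 : @strat1 R A1 A2) (m2 : @strat2 R A1 A2).
Hypotheses (av1 : avail_strat1 r m1) (av2 : avail_strat2 r m2).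
Hypothesis no_oneshot : forall g, (size g < T)%N ->
  no_oneshot1 u1 r m1 m2 g (T - size g).-1 /\ no_oneshot2 u2 r m1 m2 g (T - size g).-1.

Lemma no_deviation1 n g t1 : avail_strat1 r t1 -> (size g + n = T)%N ->
  value u1 n t1 m2 g <= value u1 n m1 m2 g.
Proof.
elim: n g => [|n IH] g at1 hs //=.
have [O1 _] := no_oneshot (ltac:(lia) : (size g < T)%N).
rewrite (_ : (T - size g).-1 = n) in O1; last by lia.
apply: le_trans (O1 _ (at1 g)); apply: ler_sum => b1 _; apply: ler_sum => b2 _.
have [[[t0 _] _] [[s0 _] _]] := (at1 g, av2 g).
apply: ler_wpM2l; first by apply: mulr_ge0.
rewrite lerD2l; apply: IH => //.
by rewrite size_rcons addSnnS.
Qed.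

Lemma no_deviation2 n g t2 : avail_strat2 r t2 -> (size g + n = T)%N ->
  value u2 n m1 t2 g <= value u2 n m1 m2 g.
Proof.
elim: n g => [|n IH] g at2 hs //=.
have [_ O2] := no_oneshot (ltac:(lia) : (size g < T)%N).
rewrite (_ : (T - size g).-1 = n) in O2; last by lia.
apply: le_trans (O2 _ (at2 g)); apply: ler_sum => b1 _; apply: ler_sum => b2 _.
have [[[t0 _] _] [[s0 _] _]] := (av1 g, at2 g).
apply: ler_wpM2l; first by apply: mulr_ge0.
rewrite lerD2l; apply: IH => //.
by rewrite size_rcons addSnnS.
Qed.

Lemma no_oneshot_SPE : SPE u1 u2 r T m1 m2.
Proof.
split=> //; split=> // h hh.
split=> [h'|h'|t1 at1|t2 at2]; rewrite /payoff; [exact: av1 | exact: av2 | |].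
- pose t1' : @strat1 R A1 A2 := fun x => t1 (drop (size h) x).
  have -> : value u1 (T - size h) t1 (cont2 m2 h) [::] =
            value u1 (T - size h) (cont1 t1' h) (cont2 m2 h) [::].
    by apply: value_ext => h' _; rewrite /cont1 /t1' drop_size_cat.
  rewrite !value_cat cats0; apply: no_deviation1 => [x|]; first exact: at1.
  by rewrite subnKC // ltnW.
- pose t2' : @strat2 R A1 A2 := fun x => t2 (drop (size h) x).
  have -> : value u2 (T - size h) (cont1 m1 h) t2 [::] =
            value u2 (T - size h) (cont1 m1 h) (cont2 t2' h) [::].
    by apply: value_ext => h' _; rewrite /cont2 /t2' drop_size_cat.
  rewrite !value_cat cats0; apply: no_deviation2 => [x|]; first exact: at2.
  by rewrite subnKC // ltnW.
Qed.

End OneShot.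

Section Plan.
Variables (R : realType) (A1 A2 : finType) (u1 u2 : A1 -> A2 -> R).
Notation prof := ({ffun A1 -> R} * {ffun A2 -> R})%type.

(* A profile (s1, s2) for the first round of G(L+1), followed by stage Nash equilibria
   plan b1 b2 j (j < L) chosen according to the first-round outcome (b1, b2). *)
Variables (r : regime) (s1 : {ffun A1 -> R}) (s2 : {ffun A2 -> R})
  (plan : A1 -> A2 -> nat -> prof) (L : nat).
Hypotheses (av1 : avail1 r s1) (av2 : avail2 r s2).
Hypothesis plan_Nash : forall b1 b2 j, stageNash u1 u2 r (plan b1 b2 j).1 (plan b1 b2 j).2.

Definition plan_strat1 : strat1 := fun h =>
  if h is x :: h' then (plan x.1 x.2 (size h')).1 else s1.
Definition plan_strat2 : strat2 := fun h =>
  if h is x :: h' then (plan x.1 x.2 (size h')).2 else s2.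

Definition plan_value (u : A1 -> A2 -> R) b1 b2 :=
  \sum_(j < L) EU u (plan b1 b2 j).1 (plan b1 b2 j).2.

Lemma value_plan (u : A1 -> A2 -> R) n x h :
  value u n plan_strat1 plan_strat2 (x :: h) =
  \sum_(j < n) EU u (plan x.1 x.2 (size h + j)).1 (plan x.1 x.2 (size h + j)).2.
Proof.
elim: n h => [|n IH] h; first by rewrite big_ord0.
rewrite /= big_ord_recl addn0.
have [ms1 ms2] := stageNash_mixed (plan_Nash x.1 x.2 (size h)).
rewrite -(EU_shift u _ ms1 ms2); apply: eq_bigr => b1 _; apply: eq_bigr => b2 _.
rewrite -rcons_cons IH size_rcons.
by congr (_ * (_ + _)); apply: eq_bigr => j _; rewrite addSnnS.
Qed.

Hypothesis root1 : forall t, avail1 r t ->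
  \sum_b1 \sum_b2 t b1 * s2 b2 * (u1 b1 b2 + plan_value u1 b1 b2)
  <= \sum_b1 \sum_b2 s1 b1 * s2 b2 * (u1 b1 b2 + plan_value u1 b1 b2).
Hypothesis root2 : forall t, avail2 r t ->
  \sum_b1 \sum_b2 s1 b1 * t b2 * (u2 b1 b2 + plan_value u2 b1 b2)
  <= \sum_b1 \sum_b2 s1 b1 * s2 b2 * (u2 b1 b2 + plan_value u2 b1 b2).

(* Later rounds play stage Nash equilibria whose choice depends only on the first round,
   so one-shot deviations there are unprofitable; in the first round this is root1/2. *)
Lemma plan_SPE : SPE u1 u2 r L.+1 plan_strat1 plan_strat2.
Proof.
apply: no_oneshot_SPE => [[|x h]|[|x h]|[|x h] hs] //=;
  try by case: (plan_Nash x.1 x.2 (size h)).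
  split=> [t at1|t at2]; [move: (root1 at1) | move: (root2 at2)];
  by congr (_ <= _); apply: eq_bigr => b1 _; apply: eq_bigr => b2 _; rewrite value_plan.
set k := (_ - _).-1.
have cont_const (u : A1 -> A2 -> R) y :
    value u k plan_strat1 plan_strat2 (rcons (x :: h) y) =
    \sum_(j < k) EU u (plan x.1 x.2 ((size h).+1 + j)).1 (plan x.1 x.2 ((size h).+1 + j)).2.
  by rewrite rcons_cons value_plan size_rcons.
have [_ _ N1 N2] := plan_Nash x.1 x.2 (size h).
have [ms1 ms2] := stageNash_mixed (plan_Nash x.1 x.2 (size h)).
split=> t avt; rewrite /=.
- under eq_bigr do under eq_bigr do rewrite cont_const.
  under [X in _ <= X]eq_bigr do under eq_bigr do rewrite cont_const.
  by rewrite !EU_shift //; [rewrite lerD2r; apply: N1 | case: avt].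
- under eq_bigr do under eq_bigr do rewrite cont_const.
  under [X in _ <= X]eq_bigr do under eq_bigr do rewrite cont_const.
  by rewrite !EU_shift //; [rewrite lerD2r; apply: N2 | case: avt].
Qed.

Lemma plan_LS : ~ stageNash u1 u2 r s1 s2 -> LS u1 u2 r.
Proof.
move=> nN; exists L.+1; split=> //; exists plan_strat1, plan_strat2.
by split; [exact: plan_SPE | exists [::]].
Qed.

End Plan.

Section ValueSets.
Variable R : realType.

Definition atmost1 (V : R -> Prop) := forall v w, V v -> V w -> v = w.

Lemma many_or_atmost1 (V : R -> Prop) : manyVals V \/ atmost1 V.
Proof.
have [|none] := classic (manyVals V); [by left | right => v w Vv Vw].
by apply: NNPP => nvw; apply: none; exists v, w.
Qed.

Lemma oneVal_atmost1 (V : R -> Prop) : oneVal V -> atmost1 V.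
Proof. by case=> v [_ H] x y /H -> /H ->. Qed.

Lemma noVal_atmost1 (V : R -> Prop) : noVal V -> atmost1 V.
Proof. by move=> H x y /H. Qed.

Lemma atmost1_oneVal (V : R -> Prop) v : atmost1 V -> V v -> oneVal V.
Proof. by move=> A Vv; exists v; split=> // w Vw; apply: A. Qed.

End ValueSets.

Section Incentives.
Variables (R : realType) (A1 A2 : finType) (u1 u2 : A1 -> A2 -> R).
Notation prof := ({ffun A1 -> R} * {ffun A2 -> R})%type.
Notation NashP r p := (stageNash u1 u2 r p.1 p.2).

Definition Vpay (u : A1 -> A2 -> R) r (v : R) : Prop :=
  exists s1 s2, stageNash u1 u2 r s1 s2 /\ v = EU u s1 s2.

(* Two stage Nash equilibria that u ranks strictly: a reward and a punishment. *)
Definition spread (u : A1 -> A2 -> R) r : Prop :=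
  exists hi lo : prof, [/\ NashP r hi, NashP r lo & EU u lo.1 lo.2 < EU u hi.1 hi.2].

Lemma many_spread (u : A1 -> A2 -> R) r : manyVals (Vpay u r) -> spread u r.
Proof.
move=> [_ [_ [[x1 [x2 [Nx ->]]] [y1 [y2 [Ny ->]]] xy]]].
have [lt|gt] : EU u x1 x2 < EU u y1 y2 \/ EU u y1 y2 < EU u x1 x2.
  by move/eqP: xy; rewrite neq_lt => /orP.
  by exists (y1, y2), (x1, x2).
by exists (x1, x2), (y1, y2).
Qed.

Lemma Vpay_nonempty (u u' : A1 -> A2 -> R) r v : Vpay u r v -> exists w, Vpay u' r w.
Proof. by case=> s1 [s2 [N _]]; exists (EU u' s1 s2), s1, s2. Qed.

Lemma gap_multiple {A : finType} (g : A -> R) c d : 0 < d ->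
  exists k : nat, forall k' : nat, (k <= k')%N -> forall b, g b - c <= k'%:R * d.
Proof.
move=> d0; pose M := \sum_b `|g b - c|.
exists (Num.Def.archi_bound (M / d)) => k' kk' b.
have gM : g b - c <= M.
  by apply: le_trans (ler_norm _) _; rewrite /M (bigD1 b) //= lerDl sumr_ge0.
apply: (le_trans gM); apply: ltW; rewrite -ltr_pdivrMr //.
apply: lt_le_trans (archi_boundP _) _; first by rewrite divr_ge0 ?sumr_ge0 // ltW.
by rewrite ler_nat.
Qed.

Lemma incentive {A : finType} (g : A -> R) c (u : A1 -> A2 -> R) r :
  (exists N0 : prof, NashP r N0) -> (forall b, g b <= c) \/ spread u r ->
  exists hi lo : prof, [/\ NashP r hi, NashP r lo &
     exists k : nat, forall k' : nat, (k <= k')%N ->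
       forall b, g b - c <= k'%:R * (EU u hi.1 hi.2 - EU u lo.1 lo.2)].
Proof.
move=> [N0 N0N] [gc|[hi [lo [Nh Nl gap]]]].
  by exists N0, N0; split=> //; exists 0%N => k' _ b; rewrite subrr mulr0 subr_le0.
by exists hi, lo; split=> //; apply: gap_multiple; rewrite subr_gt0.
Qed.

Lemma sum_two_phases (F : prof -> R) (P Q : prof) k :
  \sum_(j < k + k) F (if (j < k)%N then P else Q) = F P *+ k + F Q *+ k.
Proof.
rewrite big_split_ord /= (eq_bigr (fun _ => F P)) => [|i _]; last by rewrite ltn_ord.
rewrite [X in _ + X](eq_bigr (fun _ => F Q)) => [|i _]; last by rewrite ltnNge leq_addr.
by rewrite !sumr_const !card_ord.
Qed.

(* For k rounds a deviation of player 1
   is punished, then for k rounds a deviation of player 2. *)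
Lemma pure_LS r a1 a2 :
  ~ stageNash u1 u2 r (pure_mixed a1) (pure_mixed a2) ->
  (exists N0 : prof, NashP r N0) ->
  (forall b1, u1 b1 a2 <= u1 a1 a2) \/ spread u1 r ->
  (forall b2, u2 a1 b2 <= u2 a1 a2) \/ spread u2 r ->
  LS u1 u2 r.
Proof.
move=> nN N0 D1 D2.
have [hi1 [lo1 [Nh1 Nl1 [k1 K1]]]] := incentive (g := fun b => u1 b a2) N0 D1.
have [hi2 [lo2 [Nh2 Nl2 [k2 K2]]]] := incentive (g := fun b => u2 a1 b) N0 D2.
set k := (k1 + k2)%N.
pose X b1 (b2 : A2) : prof := if b1 != a1 then lo1 else hi1.
pose Y b1 b2 : prof := if b1 != a1 then hi2 else if b2 != a2 then lo2 else hi2.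
pose plan b1 b2 j : prof := if (j < k)%N then X b1 b2 else Y b1 b2.
have plan_Nash b1 b2 j : NashP r (plan b1 b2 j) by rewrite /plan /X /Y; do !case: ifP.
have plan_valueE u b1 b2 : plan_value plan (k + k) u b1 b2 =
    EU u (X b1 b2).1 (X b1 b2).2 *+ k + EU u (Y b1 b2).1 (Y b1 b2).2 *+ k.
  exact: (sum_two_phases (fun p => EU u p.1 p.2)).
apply: (plan_LS (plan := plan) (L := k + k) (avail1_pure _ _ a1) (avail2_pure _ _ a2)
  plan_Nash _ _ nN).
- move=> t [mt _]; rewrite !sum_pure_r sum_pure; apply: mix_le => // b1.
  rewrite !plan_valueE /X /Y !eqxx /=.
  have [->|nb] := eqVneq b1 a1; first by [].
  have := K1 k (leq_addr _ _) b1; rewrite /= mulr_natl mulrnBl; lra.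
- move=> t [mt _]; rewrite !sum_pure_l sum_pure; apply: mix_le => // b2.
  rewrite !plan_valueE /X /Y !eqxx /=.
  have [->|nb] := eqVneq b2 a2; first by [].
  have := K2 k (leq_addl _ _) b2; rewrite /= mulr_natl mulrnBl; lra.
Qed.

End Incentives.

Section MixedSufficiency.
Variables (R : realType) (A1 A2 : finType) (u1 u2 : A1 -> A2 -> R).
Notation prof := ({ffun A1 -> R} * {ffun A2 -> R})%type.
Notation NashMP p := (stageNash u1 u2 MP p.1 p.2).

Definition pay1 (p : prof) := EU u1 p.1 p.2.

Definition Dsum (x : R) : Prop :=
  exists ds : seq R, (forall d, d \in ds -> Dset u1 u2 d) /\ x = \sum_(d <- ds) d.

Lemma Dsum_pairs x : Dsum x ->
  exists ps : seq (prof * prof), (forall p, p \in ps -> NashMP p.1 /\ NashMP p.2) /\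
    x = \sum_(p <- ps) (pay1 p.1 - pay1 p.2).
Proof.
case=> ds [Dds Ex]; rewrite {x}Ex; elim: ds Dds => [|d ds IH] Dds.
  by exists [::]; rewrite !big_nil.
have [|ps [Nps Eps]] := IH; first by move=> x xds; apply: Dds; rewrite inE xds orbT.
have [x1 [x2 [y1 [y2 [Nx Ny ->]]]]] := Dds d (mem_head _ _).
exists (((x1, x2), (y1, y2)) :: ps); split; last by rewrite !big_cons Eps.
by move=> p; rewrite inE => /orP [/eqP ->|/Nps].
Qed.

(* Entry (c, (P, Q)) of a schedule: play P if player 1 opened with c, and Q otherwise. *)
Definition sel (t : A1 * (prof * prof)) b := if t.1 == b then t.2.1 else t.2.2.

(* If every u1 a a2 - u1 b a2 (b in l) lies in the additive span of D, a schedule of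
   stage Nash equilibria compensates player 1 exactly for having opened with b rather
   than a. *)
Lemma compensation_schedule (a : A1) (a2 : A2) (l : seq A1) : uniq l -> a \notin l ->
  (forall b, b \in l -> Dsum (u1 a a2 - u1 b a2)) ->
  exists Ls : seq (A1 * (prof * prof)),
    (forall t, t \in Ls -> NashMP t.2.1 /\ NashMP t.2.2) /\
    forall b, \sum_(t <- Ls) pay1 (sel t b) =
       \sum_(t <- Ls) pay1 t.2.2 + (if b \in l then u1 a a2 - u1 b a2 else 0).
Proof.
elim: l => [|c l IH] /= ul al Dl.
  by exists [::]; split=> // b; rewrite !big_nil addr0.
move: ul al => /andP [cl ul]; rewrite inE negb_or => /andP [ac al].
have [|Ls [NLs HLs]] := IH ul al; first by move=> b bl; apply: Dl; rewrite inE bl orbT.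
have [ps [Nps Eps]] := Dsum_pairs (Dl c (mem_head _ _)).
exists ([seq (c, p) | p <- ps] ++ Ls); split.
  by move=> t; rewrite mem_cat => /orP [/mapP [p pin ->]|/NLs //]; exact: Nps.
move=> b; rewrite !big_cat !big_map /= HLs inE.
have [<-|nb] := eqVneq c b.
  rewrite (negbTE cl) /= addr0 /sel /= eqxx Eps sumrB; ring.
have -> : \sum_(p <- ps) pay1 (sel (c, p) b) = \sum_(p <- ps) pay1 p.2.
  by apply: eq_bigr => p _; rewrite /sel /= (negbTE nb).
by rewrite /= addrA.
Qed.

Definition schedule_plan (Ls : seq (A1 * (prof * prof))) (tail : A1 -> prof)
    (b1 : A1) (b2 : A2) j : prof :=
  if (j < size Ls)%N then sel (nth (b1, (tail b1, tail b1)) Ls j) b1 else tail b1.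

Lemma schedule_plan_Nash Ls tail :
  (forall t, t \in Ls -> NashMP t.2.1 /\ NashMP t.2.2) -> (forall b, NashMP (tail b)) ->
  forall b1 b2 j, NashMP (schedule_plan Ls tail b1 b2 j).
Proof.
move=> NLs Ntail b1 b2 j; rewrite /schedule_plan; case: ifP => // jLs.
by have := NLs _ (mem_nth (b1, (tail b1, tail b1)) jLs); rewrite /sel; case: ifP => _ [].
Qed.

Lemma schedule_plan_value Ls tail k (u : A1 -> A2 -> R) b1 b2 :
  plan_value (schedule_plan Ls tail) (size Ls + k) u b1 b2 =
  \sum_(t <- Ls) EU u (sel t b1).1 (sel t b1).2 + EU u (tail b1).1 (tail b1).2 *+ k.
Proof.
rewrite /plan_value big_split_ord /=; congr (_ + _).
  rewrite (big_nth (b1, (tail b1, tail b1))) big_mkord.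
  by apply: eq_bigr => i _; rewrite /schedule_plan ltn_ord.
rewrite (eq_bigr (fun _ => EU u (tail b1).1 (tail b1).2)) => [|i _].
  by rewrite sumr_const card_ord.
by rewrite /schedule_plan ltnNge leq_addr.
Qed.

(* The schedule above makes player 1 indifferent on the
   support of s1, and a long final phase rewarding the support (hi) and punishing the
   other actions (lo) deters deviations outside it; player 2's continuation payoff is
   constant since |V_2^{m,p}| = 1. *)
Lemma mixed_LS (s1 : {ffun A1 -> R}) a a1' a2 :
  mixed s1 -> s1 a != 0 ->
  EU u1 s1 (pure_mixed a2) < u1 a1' a2 ->
  (forall b2, EU u2 s1 (pure_mixed b2) <= EU u2 s1 (pure_mixed a2)) ->
  (forall a', s1 a' != 0 -> a' != a -> Dsum (u1 a a2 - u1 a' a2)) ->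
  manyVals (Vpay1 u1 u2 MP) -> oneVal (Vpay2 u1 u2 MP) -> LS u1 u2 MP.
Proof.
move=> ms1 sa lt1 BR2 Dsupp /(many_spread (u := u1)) [hi [lo [Nhi Nlo gap]]] [v2 [_ V2]].
pose l := [seq b <- enum A1 | (s1 b != 0) && (b != a)].
have inl b : (b \in l) = (s1 b != 0) && (b != a) by rewrite mem_filter mem_enum andbT.
have [Ls [NLs HLs]] := @compensation_schedule a a2 l
  (filter_uniq _ (enum_uniq _)) (ltac:(by rewrite inl eqxx andbF))
  (fun b => ltac:(by rewrite inl => /andP [sb nb]; exact: Dsupp)).
have [k Hk] := gap_multiple (fun b => u1 b a2) (u1 a a2) (ltac:(by rewrite subr_gt0) :
  0 < pay1 hi - pay1 lo).
pose tail b1 : prof := if s1 b1 != 0 then hi else lo.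
pose plan := schedule_plan Ls tail; set L := (size Ls + k)%N.
have tail_Nash b : NashMP (tail b) by rewrite /tail; case: (s1 b != 0).
have plan_Nash := schedule_plan_Nash NLs tail_Nash.
have value2 b1 b2 : plan_value plan L u2 b1 b2 = v2 *+ L.
  rewrite /plan_value (eq_bigr (fun _ => v2)) => [|i _]; first by rewrite sumr_const card_ord.
  by apply: V2; exists (plan b1 b2 i).1, (plan b1 b2 i).2.
pose M := u1 a a2 + \sum_(t <- Ls) pay1 t.2.2 + pay1 hi *+ k.
have on_supp b1 : s1 b1 != 0 -> u1 b1 a2 + plan_value plan L u1 b1 a2 = M.
  move=> sb; rewrite schedule_plan_value HLs inl /tail sb /=.
  by have [->|nb] := eqVneq b1 a; rewrite /M /pay1 /=; ring.
have off_supp b1 : u1 b1 a2 + plan_value plan L u1 b1 a2 <= M.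
  have [sb|sb] := eqVneq (s1 b1) 0; last by rewrite on_supp.
  rewrite schedule_plan_value HLs inl /tail sb eqxx /= addr0 /M /pay1.
  have := Hk k (leqnn k) b1; rewrite /pay1 /= mulr_natl mulrnBl; lra.
have avs1 : avail1 MP s1 by split.
apply: (plan_LS (plan := plan) (L := L) avs1 (avail2_pure _ _ a2) plan_Nash).
- move=> t [mt _]; rewrite !sum_pure_r.
  by apply: (le_trans (mix_le mt off_supp)); rewrite (mix_supp_eq ms1 on_supp).
- move=> t /(pure_of_avail2 (ltac:(by []) : MP <> MM)) [b2 ->].
  under eq_bigr do under eq_bigr do rewrite value2.
  under [X in _ <= X]eq_bigr do under eq_bigr do rewrite value2.
  by rewrite !EU_shift ?lerD2r ?BR2 //; apply: mixed_pure.
- by case/stageNashP => _ _ /(_ a1'); rewrite EU_pp; lra.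
Qed.

End MixedSufficiency.

Lemma sum_diff_pairs (R : realType) (V : R -> Prop) (xs ys : seq R) : size xs = size ys ->
  (forall x, x \in xs -> V x) -> (forall y, y \in ys -> V y) ->
  exists ds : seq R, (forall d, d \in ds -> exists x y, [/\ V x, V y & d = x - y]) /\
     \sum_(x <- xs) x - \sum_(y <- ys) y = \sum_(d <- ds) d.
Proof.
elim: xs ys => [|x xs IH] [|y ys] sz Vx Vy //; first by exists [::]; rewrite !big_nil subrr.
have [||ds [Dds Eds]] := IH ys (succn_inj sz).
- by move=> z zxs; apply: Vx; rewrite inE zxs orbT.
- by move=> z zys; apply: Vy; rewrite inE zys orbT.
exists ((x - y) :: ds); split; last by rewrite !big_cons -Eds addrACA opprD.
move=> d; rewrite inE => /orP [/eqP ->|/Dds //].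
by exists x, y; split=> //; [apply: Vx | apply: Vy]; rewrite mem_head.
Qed.

Section Necessity.
Variables (R : realType) (A1 A2 : finType) (u1 u2 : A1 -> A2 -> R).

Lemma deepest_suboptimal r : LS u1 u2 r -> exists T m1 m2 h,
  [/\ SPE u1 u2 r T m1 m2, (size h < T)%N, ~ stageNash u1 u2 r (m1 h) (m2 h) &
      forall g, (size h < size g)%N -> (size g < T)%N -> stageNash u1 u2 r (m1 g) (m2 g)].
Proof.
case=> T [_ [m1 [m2 [S [h0 [hs0 nN0]]]]]].
suff : forall n h, (T - size h <= n)%N -> (size h < T)%N ->
    ~ stageNash u1 u2 r (m1 h) (m2 h) -> exists h', [/\ (size h' < T)%N,
      ~ stageNash u1 u2 r (m1 h') (m2 h') &
      forall g, (size h' < size g)%N -> (size g < T)%N -> stageNash u1 u2 r (m1 g) (m2 g)].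
  by move/(_ _ h0 (leqnn _) hs0 nN0) => [h' [H1 H2 H3]]; exists T, m1, m2, h'.
elim=> [|n IH] h hn hs nN; first by move: hn; rewrite leqn0 subn_eq0 leqNgt hs.
have [[g [g1 g2 g3]]|none] := classic (exists g, [/\ (size h < size g)%N, (size g < T)%N &
                                       ~ stageNash u1 u2 r (m1 g) (m2 g)]).
  by apply: (IH g) => //; lia.
by exists h; split=> // g g1 g2; apply: NNPP => ng; apply: none; exists g.
Qed.

Variables (r : regime) (T : nat) (m1 : @strat1 R A1 A2) (m2 : @strat2 R A1 A2).

Lemma value_Nash_const (u : A1 -> A2 -> R) v n g :
  (forall g', (size g <= size g')%N -> (size g' < size g + n)%N ->
      stageNash u1 u2 r (m1 g') (m2 g') /\ EU u (m1 g') (m2 g') = v) ->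
  value u n m1 m2 g = v *+ n.
Proof.
elim: n g => [|n IH] g H //=.
have [N E] := H g (leqnn _) (ltac:(lia)).
have [ms1 ms2] := stageNash_mixed N.
rewrite (eq_bigr (fun b1 => \sum_b2 m1 g b1 * m2 g b2 * (u b1 b2 + v *+ n))).
  by rewrite EU_shift // E mulrS.
move=> b1 _; apply: eq_bigr => b2 _; rewrite IH // => g' h1 h2.
by apply: H; rewrite size_rcons in h1 h2; lia.
Qed.

Hypothesis S : SPE u1 u2 r T m1 m2.
Hypothesis r_pure2 : r <> MM.

Definition cont_pay1 g a2 b := u1 b a2 + value u1 (T - size g).-1 m1 m2 (rcons g (b, a2)).

Lemma cont_pay1_max g a2 : (size g < T)%N -> m2 g = pure_mixed a2 ->
  (forall b, cont_pay1 g a2 b <= \sum_b1 m1 g b1 * cont_pay1 g a2 b1) /\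
  value u1 (T - size g) m1 m2 g = \sum_b1 m1 g b1 * cont_pay1 g a2 b1.
Proof.
move=> gT E; have [O1 _] := SPE_no_oneshot S gT; split.
  by move=> b; have := O1 _ (avail1_pure _ r b); rewrite E !sum_pure_r sum_pure.
have -> : (T - size g = (T - size g).-1.+1)%N by rewrite prednK // subn_gt0.
by rewrite /= E sum_pure_r.
Qed.

Lemma value_Nash_payoffs n g : (size g + n = T)%N ->
  (forall g', (size g <= size g')%N -> (size g' < T)%N -> stageNash u1 u2 r (m1 g') (m2 g')) ->
  exists vs : seq R, [/\ size vs = n, (forall v, v \in vs -> Vpay1 u1 u2 r v) &
     value u1 n m1 m2 g = \sum_(v <- vs) v].
Proof.
elim: n g => [|n IH] g gn D; first by exists [::]; rewrite big_nil.
have gT : (size g < T)%N by lia.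
have Ng := D g (leqnn _) gT.
have [ms1 _] := stageNash_mixed Ng.
have [_ av2 _ _] := Ng; have [a2 E] := pure_of_avail2 r_pure2 av2.
have [F V] := cont_pay1_max gT E.
have [b0 sb0] := mix_exists ms1.
have [vs [sz Vvs Evs]] := IH (rcons g (b0, a2)) (ltac:(rewrite size_rcons; lia))
   (fun g' h1 => D g' (ltac:(rewrite size_rcons in h1; lia))).
have stage_b0 : u1 b0 a2 = EU u1 (m1 g) (m2 g).
  case/stageNashP: Ng => _ _ B1 _; rewrite E EU_pure2.
  apply: (mix_eq_supp ms1 _ (erefl _) sb0) => b.
  by have := B1 b; rewrite E EU_pp EU_pure2.
exists (EU u1 (m1 g) (m2 g) :: vs); split; first by rewrite /= sz.
  by move=> v; rewrite inE => /orP [/eqP ->|/Vvs //]; exists (m1 g), (m2 g).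
rewrite (_ : n.+1 = T - size g)%N; last by lia.
rewrite V -(mix_eq_supp ms1 F (erefl _) sb0) big_cons /cont_pay1 -stage_b0.
by rewrite (_ : (T - size g).-1 = n) ?Evs //; lia.
Qed.

Variable h : @history A1 A2.
Hypotheses (hs : (size h < T)%N)
  (deeper : forall g, (size h < size g)%N -> (size g < T)%N -> stageNash u1 u2 r (m1 g) (m2 g)).

Lemma cont_value_const (u : A1 -> A2 -> R) : atmost1 (Vpay u1 u2 u r) ->
  forall y y', value u (T - size h).-1 m1 m2 (rcons h y) =
               value u (T - size h).-1 m1 m2 (rcons h y').
Proof.
move=> V1 y y'; set k := (T - size h).-1.
have [->|kp] := eqVneq k 0%N; first by [].
have Ny : stageNash u1 u2 r (m1 (rcons h y)) (m2 (rcons h y)).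
  by apply: deeper; rewrite size_rcons // /k in kp *; lia.
suff E z : value u k m1 m2 (rcons h z) = EU u (m1 (rcons h y)) (m2 (rcons h y)) *+ k.
  by rewrite !E.
apply: value_Nash_const => g'; rewrite size_rcons => h1 h2.
have Ng : stageNash u1 u2 r (m1 g') (m2 g') by apply: deeper; rewrite /k in h2; lia.
split=> //; apply: V1; first by exists (m1 g'), (m2 g').
by exists (m1 (rcons h y)), (m2 (rcons h y)).
Qed.

(* With |V_1^r| <= 1 the continuation can neither reward nor punish player 1, so at h
   player 1 plays a stage best reply; likewise for player 2. *)
Lemma deepest_best_reply1 : atmost1 (Vpay1 u1 u2 r) ->
  forall b1, EU u1 (pure_mixed b1) (m2 h) <= EU u1 (m1 h) (m2 h).
Proof.
move=> V1 b1; have [O1 _] := SPE_no_oneshot S hs; case: S => av1 [av2 _].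
have [[ms1 _] [ms2 _]] := (av1 h, av2 h).
have [[a1 _] [a2 _]] := (mix_exists ms1, mix_exists ms2).
have := O1 _ (avail1_pure _ r b1).
under eq_bigr do under eq_bigr do rewrite (cont_value_const V1 _ (a1, a2)).
under [X in _ <= X]eq_bigr do under eq_bigr do rewrite (cont_value_const V1 _ (a1, a2)).
by rewrite !EU_shift ?lerD2r //; apply: mixed_pure.
Qed.

Lemma deepest_best_reply2 : atmost1 (Vpay2 u1 u2 r) ->
  forall b2, EU u2 (m1 h) (pure_mixed b2) <= EU u2 (m1 h) (m2 h).
Proof.
move=> V2 b2; have [_ O2] := SPE_no_oneshot S hs; case: S => av1 [av2 _].
have [[ms1 _] [ms2 _]] := (av1 h, av2 h).
have [[a1 _] [a2 _]] := (mix_exists ms1, mix_exists ms2).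
have := O2 _ (avail2_pure _ r b2).
under eq_bigr do under eq_bigr do rewrite (cont_value_const V2 _ (a1, a2)).
under [X in _ <= X]eq_bigr do under eq_bigr do rewrite (cont_value_const V2 _ (a1, a2)).
by rewrite !EU_shift ?lerD2r //; apply: mixed_pure.
Qed.

Definition Vdiff1 (d : R) : Prop :=
  exists x y, [/\ Vpay1 u1 u2 r x, Vpay1 u1 u2 r y & d = x - y].

(* Player 1 is indifferent between the actions of his support at h, so their stage
   payoffs differ by the difference of two continuation values, each a sum of equally
   many stage Nash payoffs. *)
Lemma deepest_support_diff a2 : m2 h = pure_mixed a2 ->
  forall a a', m1 h a != 0 -> m1 h a' != 0 ->
  exists ds : seq R, (forall d, d \in ds -> Vdiff1 d) /\
    u1 a a2 - u1 a' a2 = \sum_(d <- ds) d.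
Proof.
move=> E a a' sa sa'; have [F _] := cont_pay1_max hs E.
have [ms1 _] := S.1 h.
have [fa fa'] := (mix_eq_supp ms1 F (erefl _) sa, mix_eq_supp ms1 F (erefl _) sa').
have tail_Nash b g' : (size (rcons h (b, a2)) <= size g')%N -> (size g' < T)%N ->
    stageNash u1 u2 r (m1 g') (m2 g').
  by rewrite size_rcons; exact: deeper.
have tail_len b : (size (rcons h (b, a2)) + (T - size h).-1 = T)%N.
  by rewrite size_rcons; lia.
have [vs [szs Vvs Evs]] := value_Nash_payoffs (tail_len a) (tail_Nash a).
have [ws [szw Vws Ews]] := value_Nash_payoffs (tail_len a') (tail_Nash a').
have [ds [Dds Eds]] := sum_diff_pairs (etrans szw (esym szs)) Vws Vvs.
exists ds; split=> //; rewrite -Eds -Evs -Ews.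
by move: (etrans fa (esym fa')); rewrite /cont_pay1; lra.
Qed.

End Necessity.

Section Characterisation.
Variables (R : realType) (A1 A2 : finType) (u1 u2 : A1 -> A2 -> R).

Lemma LS_witness r : r <> MM -> LS u1 u2 r -> exists s1 a2,
  [/\ avail1 r s1, ~ stageNash u1 u2 r s1 (pure_mixed a2),
      atmost1 (Vpay1 u1 u2 r) ->
        forall b1, EU u1 (pure_mixed b1) (pure_mixed a2) <= EU u1 s1 (pure_mixed a2),
      atmost1 (Vpay2 u1 u2 r) ->
        forall b2, EU u2 s1 (pure_mixed b2) <= EU u2 s1 (pure_mixed a2) &
      forall a a', s1 a != 0 -> s1 a' != 0 ->
        exists ds : seq R, (forall d, d \in ds -> Vdiff1 u1 u2 r d) /\
          u1 a a2 - u1 a' a2 = \sum_(d <- ds) d].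
Proof.
move=> rM /deepest_suboptimal [T [m1 [m2 [h [S hs nN deeper]]]]].
have [a2 E] := pure_of_avail2 rM (S.2.1 h).
exists (m1 h), a2; rewrite -E; split=> //; first exact: S.1.
- exact (deepest_best_reply1 S hs deeper).
- exact (deepest_best_reply2 S hs deeper).
- exact (deepest_support_diff S rM hs deeper E).
Qed.

Lemma atmost1_notLS r : r <> MM ->
  atmost1 (Vpay1 u1 u2 r) -> atmost1 (Vpay2 u1 u2 r) -> ~ LS u1 u2 r.
Proof.
move=> rM V1 V2 /(LS_witness rM) [s1 [a2 [av1 nN B1 B2 _]]].
by apply: nN; apply/stageNashP; split; [| exact: avail2_pure | exact: B1 | exact: B2].
Qed.

Lemma pure_Nash_char r a1 a2 :
  stageNash u1 u2 r (pure_mixed a1) (pure_mixed a2) <->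
  (forall b1, u1 b1 a2 <= u1 a1 a2) /\ (forall b2, u2 a1 b2 <= u2 a1 a2).
Proof.
rewrite stageNashP; split=> [[_ _ B1 B2]|[B1 B2]].
  by split=> b; [move: (B1 b) | move: (B2 b)]; rewrite !EU_pp.
split; [exact: avail1_pure | exact: avail2_pure | |] => b; by rewrite !EU_pp.
Qed.

Lemma best_reply_supp (s1 : {ffun A1 -> R}) a2 b : mixed s1 -> s1 b != 0 ->
  (forall b1, u1 b1 a2 <= EU u1 s1 (pure_mixed a2)) -> forall b', u1 b' a2 <= u1 b a2.
Proof.
move=> ms sb; rewrite EU_pure2 => B b'.
by rewrite (mix_eq_supp ms B (erefl _) sb).
Qed.

Lemma nonNash_pure (s1 : {ffun A1 -> R}) a2 : mixed s1 ->
  ~ stageNash u1 u2 MP s1 (pure_mixed a2) ->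
  exists b, ~ stageNash u1 u2 MP (pure_mixed b) (pure_mixed a2).
Proof.
move=> ms nN; apply: NNPP => allN; apply: nN; apply/stageNashP.
have N b : stageNash u1 u2 MP (pure_mixed b) (pure_mixed a2).
  by apply: NNPP => nb; apply: allN; exists b.
split=> [|||b1]; [by split | exact: avail2_pure | move=> b1 |].
  rewrite EU_pp EU_pure2; apply: mix_ge => // b.
  by have /pure_Nash_char [/(_ b1)] := N b.
rewrite !EU_pure2; apply: ler_sum => b _; apply: ler_wpM2l; first by case: ms.
by have /pure_Nash_char [_ /(_ b1)] := N b.
Qed.

Lemma Vdiff1_Dset d : Vdiff1 u1 u2 MP d -> Dset u1 u2 d.
Proof. by case=> _ [_ [[s1 [s2 [Ns ->]]] [t1 [t2 [Nt ->]]] ->]]; exists s1, s2, t1, t2. Qed.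

Lemma Cmp_LS : Cmp u1 u2 -> LS u1 u2 MP.
Proof.
case=> [[M1 M2 [s1 [a2 [ms nN]]]] |
        [[M1 O2 [s1 [a1' [a2 [ms lt BR2 Dsupp]]]]] | [O1 M2 [s1 [a2 [a2' [ms lt BR1]]]]]]].
- have [b nb] := nonNash_pure ms nN.
  have [hi [lo [Nhi _ _]]] := many_spread M1.
  apply: (pure_LS nb); first by exists hi.
    by right; exact: many_spread M1.
  by right; exact: many_spread M2.
- have [a [sa Da]] : exists a, s1 a != 0 /\
      forall a', s1 a' != 0 -> a' != a -> Dsum u1 u2 (u1 a a2 - u1 a' a2).
    have [gt1|le1] := ltnP 1 #|supp s1|.
      have [a ain Da] := Dsupp gt1; exists a; rewrite inE in ain; split=> // a' sa'.
      by apply: Da; rewrite inE.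
    have [a sa] := mix_exists ms; exists a; split=> // a' sa' na.
    by move: le1; rewrite leqNgt => /negP []; apply/card_gt1P; exists a', a; rewrite !inE sa sa'.
  exact: mixed_LS ms sa lt BR2 Da M1 O2.
- have [b [sb lb]] := EU2_gap_supp ms lt.
  have B1 b1 : u1 b1 a2 <= EU u1 s1 (pure_mixed a2).
    by move: (BR1 _ (mixed_pure _ b1)); rewrite EU_pp.
  have BRb := best_reply_supp ms sb B1.
  have [hi [lo [Nhi _ _]]] := many_spread M2.
  apply: (@pure_LS _ _ _ u1 u2 MP b a2);
    [ | by exists hi | by left | right; exact: many_spread M2].
  by case/pure_Nash_char => _ /(_ a2'); lra.
Qed.

Lemma LS_Cmp : LS u1 u2 MP -> Cmp u1 u2.
Proof.
move=> /(LS_witness (ltac:(by []) : MP <> MM)) [s1 [a2 [[ms _] nN B1 B2 D]]].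
have [M1|V1] := many_or_atmost1 (Vpay1 u1 u2 MP);
have [M2|V2] := many_or_atmost1 (Vpay2 u1 u2 MP).
- by left; split=> //; exists s1, a2.
- right; left; split=> //.
    by have [v [_ [/(Vpay_nonempty u2) [w Vw] _ _]]] := M1; exact: atmost1_oneVal V2 Vw.
  have [a1' lt] : exists a1', EU u1 s1 (pure_mixed a2) < u1 a1' a2.
    apply: NNPP => none; apply: nN; apply/stageNashP.
    split; [by split | exact: avail2_pure | move=> b1 | exact: B2 V2].
    by rewrite EU_pp leNgt; apply/negP => l; apply: none; exists b1.
  exists s1, a1', a2; split=> //; first exact: B2 V2.
  case/card_gt1P => x [_ [xin _ _]]; exists x => // a' ain _.
  have [ds [Dds Eds]] : exists ds : seq R, (forall d, d \in ds -> Vdiff1 u1 u2 MP d) /\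
      u1 x a2 - u1 a' a2 = \sum_(d <- ds) d by apply: D; move: xin ain; rewrite !inE.
  by exists ds; split=> // d /Dds /Vdiff1_Dset.
- right; right; split=> //.
    by have [v [_ [/(Vpay_nonempty u1) [w Vw] _ _]]] := M2; exact: atmost1_oneVal V1 Vw.
  have [a2' lt] : exists a2', EU u2 s1 (pure_mixed a2) < EU u2 s1 (pure_mixed a2').
    apply: NNPP => none; apply: nN; apply/stageNashP.
    split; [by split | exact: avail2_pure | exact: B1 V1 | move=> b2].
    by rewrite leNgt; apply/negP => l; apply: none; exists b2.
  exists s1, a2, a2'; split=> // t1 mt; rewrite EU_mix1; apply: mix_le => //; exact: B1 V1.
- exfalso; apply: nN; apply/stageNashP.
  by split; [split | exact: avail2_pure | exact: B1 V1 | exact: B2 V2].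
Qed.

End Characterisation.

Section PurePure.
Variables (R : realType) (A1 A2 : finType) (u1 u2 : A1 -> A2 -> R).

Definition tempted1 : Prop := exists (a1 a1' : A1) (a2 : A2),
  u1 a1 a2 < u1 a1' a2 /\ (forall b2, u2 a1 b2 <= u2 a1 a2).

Definition tempted2 : Prop := exists (a1 : A1) (a2 a2' : A2),
  (forall b1, u1 b1 a2 <= u1 a1 a2) /\ u2 a1 a2 < u2 a1 a2'.

Lemma tempted1_LS : manyVals (Vpay1 u1 u2 PP) -> tempted1 -> LS u1 u2 PP.
Proof.
move=> M [a1 [a1' [a2 [lt B2]]]]; have [hi [lo [Nhi _ _]]] := many_spread M.
apply: (@pure_LS _ _ _ u1 u2 PP a1 a2); [ | by exists hi | right; exact: many_spread M | by left].
by case/pure_Nash_char => /(_ a1'); lra.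
Qed.

Lemma tempted2_LS : manyVals (Vpay2 u1 u2 PP) -> tempted2 -> LS u1 u2 PP.
Proof.
move=> M [a1 [a2 [a2' [B1 lt]]]]; have [hi [lo [Nhi _ _]]] := many_spread M.
apply: (@pure_LS _ _ _ u1 u2 PP a1 a2); [ | by exists hi | by left | right; exact: many_spread M].
by case/pure_Nash_char => _ /(_ a2'); lra.
Qed.

(* With |V_2^{p,p}| <= 1 player 2 best-responds at the witness, so player 1 must be
   tempted there. *)
Lemma not_tempted1_notLS : atmost1 (Vpay2 u1 u2 PP) -> ~ tempted1 -> ~ LS u1 u2 PP.
Proof.
move=> V2 nT /(LS_witness (ltac:(by []) : PP <> MM)) [s1 [a2 [av1 nN _ B2 _]]].
have [a1 E1] := pure_of_avail1 av1; subst s1.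
have B2' b2 : u2 a1 b2 <= u2 a1 a2 by move: (B2 V2 b2); rewrite !EU_pp.
apply: nN; apply/pure_Nash_char; split=> // b1.
by rewrite leNgt; apply/negP => l; apply: nT; exists a1, b1, a2.
Qed.

Lemma not_tempted2_V1_sub : ~ tempted2 ->
  forall v, Vpay1 u1 u2 MP v -> Vpay1 u1 u2 PP v.
Proof.
move=> nT v [s1 [s2 [N ->]]].
have [[ms _] av2] : avail1 MP s1 /\ avail2 MP s2 by case: N.
have [a2 E] := pure_of_avail2 (ltac:(by []) : MP <> MM) av2; subst s2.
case/stageNashP: N => _ _ B1 _.
have B1' b1 : u1 b1 a2 <= EU u1 s1 (pure_mixed a2) by move: (B1 b1); rewrite EU_pp.
have [b sb] := mix_exists ms.
have BRb := best_reply_supp ms sb B1'.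
have B2 b2 : u2 b b2 <= u2 b a2.
  by rewrite leNgt; apply/negP => l; apply: nT; exists b, a2, b2.
exists (pure_mixed b), (pure_mixed a2); split; first exact/pure_Nash_char.
rewrite EU_pp EU_pure2; apply: (mix_supp_eq ms) => c sc.
by apply/eqP; rewrite eq_le BRb (best_reply_supp ms sc B1').
Qed.

Lemma allNash_noCmp : (forall a1 a2, stageNash u1 u2 PP (pure_mixed a1) (pure_mixed a2)) ->
  ~ Cmp u1 u2.
Proof.
move=> AN.
have P1 b1 b a2 : u1 b1 a2 <= u1 b a2 by have /pure_Nash_char [/(_ b1)] := AN b a2.
have P2 b b2 a2 : u2 b b2 <= u2 b a2 by have /pure_Nash_char [_ /(_ b2)] := AN b a2.
have G1 (s1 : {ffun A1 -> R}) a1' a2 : mixed s1 -> u1 a1' a2 <= EU u1 s1 (pure_mixed a2).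
  by move=> ms; rewrite EU_pure2; apply: mix_ge.
have G2 (s1 : {ffun A1 -> R}) b2 a2 : mixed s1 ->
    EU u2 s1 (pure_mixed b2) <= EU u2 s1 (pure_mixed a2).
  by move=> [s0 _]; rewrite !EU_pure2; apply: ler_sum => b _; apply: ler_wpM2l.
case=> [[_ _ [s1 [a2 [ms nN]]]] |
        [[_ _ [s1 [a1' [a2 [ms lt _ _]]]]] | [_ _ [s1 [a2 [a2' [ms lt _]]]]]]].
- apply: nN; apply/stageNashP.
  split; [by split | exact: avail2_pure | move=> b1 | move=> b2; exact: G2].
  by rewrite EU_pp; exact: G1.
- by have := G1 s1 a1' a2 ms; lra.
- by have := G2 s1 a2' a2 ms; lra.
Qed.

Lemma many_many_LS : manyVals (Vpay1 u1 u2 PP) -> manyVals (Vpay2 u1 u2 PP) ->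
  Cmp u1 u2 -> LS u1 u2 PP.
Proof.
move=> M1 M2 C.
have [[a1 [a2 nN]]|allN] :=
  classic (exists a1 a2, ~ stageNash u1 u2 PP (pure_mixed a1) (pure_mixed a2)).
  have [hi [lo [Nhi _ _]]] := many_spread M1.
  apply: (pure_LS nN); first by exists hi.
    by right; exact: many_spread M1.
  by right; exact: many_spread M2.
exfalso; apply: (allNash_noCmp _ C) => a1 a2.
by apply: NNPP => nN; apply: allN; exists a1, a2.
Qed.

Lemma atmost_many_LS : atmost1 (Vpay1 u1 u2 PP) -> manyVals (Vpay2 u1 u2 PP) ->
  Cmp u1 u2 -> LS u1 u2 PP.
Proof.
move=> V1 M2 C; have [T2|nT2] := classic tempted2; first exact: tempted2_LS.
have V1MP : atmost1 (Vpay1 u1 u2 MP).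
  by move=> v w /(not_tempted2_V1_sub nT2) Vv /(not_tempted2_V1_sub nT2); apply: V1.
case: C => [[[x [y [Vx Vy nxy]]] _ _] | [[[x [y [Vx Vy nxy]]] _ _] |
            [_ _ [s1 [a2 [a2' [ms lt BR1]]]]]]]; try by case: nxy; apply: V1MP.
exfalso; have [b [sb lb]] := EU2_gap_supp ms lt.
have B1 b1 : u1 b1 a2 <= EU u1 s1 (pure_mixed a2).
  by move: (BR1 _ (mixed_pure _ b1)); rewrite EU_pp.
by apply: nT2; exists b, a2, a2'; split=> //; exact: best_reply_supp ms sb B1.
Qed.

End PurePure.

Unset Implicit Arguments.
Set Strict Implicit.
Set Printing Implicit Defensive.

Theorem mainTheorem11 (R : realType) (A1 A2 : finType)
    (hA1 : (0 < #|A1|)%N) (hA2 : (0 < #|A2|)%N)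
    (u1 u2 : A1 -> A2 -> R) :
  (~ LS u1 u2 PP /\ LS u1 u2 MP) <->
  [\/ [/\ noVal (Vpay1 u1 u2 PP), noVal (Vpay2 u1 u2 PP) & Cmp u1 u2],
      [/\ oneVal (Vpay1 u1 u2 PP), oneVal (Vpay2 u1 u2 PP) & Cmp u1 u2] |
      [/\ manyVals (Vpay1 u1 u2 PP), oneVal (Vpay2 u1 u2 PP),
          ~ (exists (a1 a1' : A1) (a2 : A2),
               u1 a1 a2 < u1 a1' a2 /\ (forall b2 : A2, u2 a1 b2 <= u2 a1 a2)) &
          Cmp u1 u2]].
Proof.
split=> [[nLS /LS_Cmp C]|].
- have [[v V1v]|N1] := classic (exists v, Vpay1 u1 u2 PP v); last first.
    apply: Or31; split=> [v V1v|w /(Vpay_nonempty u1) [v V1v]|//]; apply: N1; by exists v.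
  have [w V2w] := Vpay_nonempty u2 V1v.
  have [M1|A1'] := many_or_atmost1 (Vpay1 u1 u2 PP);
  have [M2|A2'] := many_or_atmost1 (Vpay2 u1 u2 PP).
  + by case: nLS; exact: many_many_LS.
  + apply: Or33; split=> //; first exact: atmost1_oneVal A2' V2w.
    by move/(tempted1_LS M1).
  + by case: nLS; exact: atmost_many_LS.
  + by apply: Or32; split=> //; [exact: atmost1_oneVal A1' V1v | exact: atmost1_oneVal A2' V2w].
- case=> [[N1 N2 C]|[O1 O2 C]|[M1 O2 nT C]]; split; try exact: Cmp_LS.
  + by apply: atmost1_notLS; [| exact: noVal_atmost1 ..].
  + by apply: atmost1_notLS; [| exact: oneVal_atmost1 ..].
  + by apply: not_tempted1_notLS => //; exact: oneVal_atmost1.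
Qed.
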